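(* Let $H\le G_{d,k}$. Every $(d-1)$-multicell of $\widetilde{\mathfrak X}_{d,k}(H)$ is contained in exactly $k$ $d$-multicells if and only if $\langle\alpha_i\rangle\cap gHg^{-1}=\{e\}$ for all $i\in[\![d]\!]$ and $g\in G_{d,k}$. In particular, if $H\trianglelefteq G_{d,k}$, this holds if and only if for every $i\in[\![d]\!]$ the image of $\alpha_i$ in $G_{d,k}/H$ has order exactly $k$.
   Context: Fix $d,k\ge1$, $[\![d]\!]=\{0,\dots,d\}$. $G_{d,k}=\langle\alpha_0,\dots,\alpha_d\mid\alpha_i^k=e\rangle$; for $J\subseteq[\![d]\!]$, $K_J=\langle\alpha_j:j\in J\rangle$, $\widehat J=[\![d]\!]\setminus J$. For $H\le G_{d,k}$, $[K_{\widehat J}g]_H=\{K_{\widehat J}gh:h\in H\}$. The multicomplex $\widetilde{\mathfrak X}_{d,k}(H)$ has as multicells of dimension $|J|-1$ the classes $[K_{\widehat J}g]_H$, with containment $[K_{\widehat I}g]_H\preceq[K_{\widehat J}g]_H$ for $I\subseteq J$. Its $d$-multicells are the $[g]_H=\{gh:h\in H\}$ and its $(d-1)$-multicells are the $[K_{\{i\}}g]_H$; the $d$-multicells containing $[K_{\{i\}}g]_H$ are the classes $[g']_H$ with $[K_{\{i\}}g']_H=[K_{\{i\}}g]_H$. *)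

(* The free product G_{d,k} = <a_0..a_d | a_i^k = e> is
   modelled concretely by reduced words. *)
From mathcomp Require Import all_boot.
Set Implicit Arguments. Unset Strict Implicit. Unset Printing Implicit Defensive.

(* A letter (i, a) stands for alpha_i ^ a. *)
Definition letter := (nat * nat)%type.

Definition valid (d k : nat) (l : letter) : bool := (l.1 <= d) && (0 < l.2 < k).

Definition reduced (d k : nat) (w : seq letter) : bool :=
  all (valid d k) w && sorted (fun x y : letter => x.1 != y.1) w.

(* left multiplication of a reduced word by a single letter *)
Definition push (k : nat) (l : letter) (w : seq letter) : seq letter :=
  match w with
  | l' :: w' =>
      if l.1 == l'.1 then
        (if (l.2 + l'.2) %% k == 0 then w' else (l.1, (l.2 + l'.2) %% k) :: w')
      else l :: w
  | [::] => [:: l]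
  end.

Lemma push_red d k l w :
  valid d k l -> reduced d k w -> reduced d k (push k l w).
Proof.
case: l => i a; rewrite /valid /= => /andP[id /andP[a0 ak]].
case: w => [|[j b] w] /=; first by rewrite /reduced /= /valid /= id a0 ak.
rewrite /reduced /= => /andP[/andP[/andP[jd /andP[b0 bk]] allw] pw].
have k0 : 0 < k by apply: leq_ltn_trans ak.
case: eqP => [eij|nij].
  subst j; case: eqP => [//|nz].
    by move=> _; rewrite allw (path_sorted pw).
  rewrite /= /valid /= id allw /= lt0n ltn_pmod // andbT; apply/andP; split.
    by rewrite andbT; apply/eqP.
  by case: w pw {allw} => //= [[j' c] w].
rewrite /= /valid /= id a0 ak jd b0 bk allw /= pw andbT.
by apply/eqP.
Qed.

Lemma foldr_push_red d k u w :
  all (valid d k) u -> reduced d k w -> reduced d k (foldr (push k) w u).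
Proof.
elim: u => //= l u IH /andP[vl vu] rw.
by apply: push_red => //; apply: IH.
Qed.

Definition inv_letter (k : nat) (l : letter) : letter := (l.1, k - l.2).

Lemma inv_red d k w :
  reduced d k w -> reduced d k (rev (map (inv_letter k) w)).
Proof.
rewrite /reduced => /andP[aw sw]; apply/andP; split.
  rewrite all_rev all_map; apply/allP => l /(allP aw).
  case: l => i a; rewrite /valid /inv_letter /= => /andP[-> /andP[a0 ak]].
  by rewrite subn_gt0 ak /= ltn_subrL a0 (leq_trans _ ak).
rewrite rev_sorted; rewrite sorted_map.
by apply: sub_sorted sw => x y; rewrite /inv_letter /= eq_sym.
Qed.

Definition G (d k : nat) := {w : seq letter | reduced d k w}.

Definition Gone (d k : nat) : G d k := exist _ [::] isT.

Definition Gmul (d k : nat) (u w : G d k) : G d k :=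
  exist _ (foldr (push k) (val w) (val u))
    (foldr_push_red (proj1 (andP (proj2_sig u))) (proj2_sig w)).

Definition Ginv (d k : nat) (w : G d k) : G d k :=
  exist _ (rev (map (inv_letter k) (val w))) (inv_red (proj2_sig w)).

(* the generator alpha_i (for i <= d); it is e when k = 1 *)
Definition Galpha (d k i : nat) : G d k := insubd (Gone d k) [:: (i, 1)].

Definition Gpow (d k : nat) (g : G d k) (m : nat) : G d k := iter m (Gmul g) (Gone d k).

Definition subgroup (d k : nat) (H : G d k -> Prop) : Prop :=
  [/\ H (Gone d k), (forall x y, H x -> H y -> H (Gmul x y))
    & (forall x, H x -> H (Ginv x))].

Definition normal (d k : nat) (H : G d k -> Prop) : Prop :=
  subgroup H /\ forall g h, H h -> H (Gmul (Gmul g h) (Ginv g)).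

Definition seteq (d k : nat) (A B : G d k -> Prop) : Prop := forall x, A x <-> B x.

Definition setR (d k : nat) (S : G d k -> Prop) (h : G d k) : G d k -> Prop :=
  fun x => exists s, S s /\ x = Gmul s h.

Definition mclass (d k : nat) (H : G d k -> Prop) (S : G d k -> Prop)
  : (G d k -> Prop) -> Prop :=
  fun C => exists h, H h /\ seteq C (setR S h).

Definition mceq (d k : nat) (A B : (G d k -> Prop) -> Prop) : Prop :=
  forall C, A C <-> B C.

Definition Kcoset (d k : nat) (i : nat) (g : G d k) : G d k -> Prop :=
  fun x => exists m, x = Gmul (Gpow (Galpha d k i) m) g.

(* d-multicell [g]_H  (K_{empty} g = {g}) *)
Definition dcell (d k : nat) (H : G d k -> Prop) (g : G d k) :=
  mclass H (fun x => x = g).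

(* (d-1)-multicell [K_{i} g]_H *)
Definition ridge (d k : nat) (H : G d k -> Prop) (i : nat) (g : G d k) :=
  mclass H (Kcoset i g).

(* [g']_H is contained in [K_{i} g]_H  iff  [K_{i} g']_H = [K_{i} g]_H *)
Definition dcell_in_ridge (d k : nat) (H : G d k -> Prop) (g' : G d k) (i : nat) (g : G d k) :=
  mceq (ridge H i g') (ridge H i g).

Definition count_classes (T : Type) (eqv : T -> T -> Prop) (P : T -> Prop) (n : nat) : Prop :=
  exists f : nat -> T,
    [/\ forall j, j < n -> P (f j),
        forall j1 j2, j1 < n -> j2 < n -> eqv (f j1) (f j2) -> j1 = j2
      & forall x, P x -> exists2 j, j < n & eqv x (f j)].

Definition ridge_degree (d k : nat) (H : G d k -> Prop) (i : nat) (g : G d k) (n : nat) : Prop :=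
  count_classes (fun g1 g2 => mceq (dcell H g1) (dcell H g2))
                (fun g' => dcell_in_ridge H g' i g) n.

Definition trivial_meet (d k : nat) (H : G d k -> Prop) (i : nat) (g : G d k) : Prop :=
  forall x, (exists m, x = Gpow (Galpha d k i) m) ->
            (exists2 h, H h & x = Gmul (Gmul g h) (Ginv g)) -> x = Gone d k.

Definition quot_order (d k : nat) (H : G d k -> Prop) (x : G d k) (n : nat) : Prop :=
  [/\ 0 < n, H (Gpow x n) & forall m, 0 < m < n -> ~ H (Gpow x m)].

From mathcomp Require Import all_boot.
From Stdlib Require Import ClassicalEpsilon.
Set Implicit Arguments. Unset Strict Implicit. Unset Printing Implicit Defensive.

(* Every d-multicell contained in [K_{i} g]_H has the form [alpha_i^m g]_H, and
   [alpha_i^j1 g]_H = [alpha_i^j2 g]_H exactly when alpha_i^(j2 - j1) lies in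
   g H g^-1.  If <alpha_i> meets g H g^-1 trivially, the k powers alpha_i^j,
   j < k, therefore give k distinct d-multicells.  Otherwise some alpha_i^r
   with 0 < r < k lies in g H g^-1, every d-multicell containing the ridge is
   then one of the [alpha_i^t g]_H with t < r, and there are fewer than k of
   them.  For normal H, g H g^-1 = H, so the condition only concerns the powers
   of alpha_i lying in H, i.e. the order of alpha_i modulo H. *)

Lemma count_classes_leq (T : Type) (eqv : T -> T -> Prop) (P : T -> Prop)
    (g : nat -> T) n r :
  (forall x y z, eqv x z -> eqv y z -> eqv x y) ->
  (forall x, P x -> exists2 t, t < r & eqv x (g t)) ->
  count_classes eqv P n -> n <= r.
Proof.
move=> eqv_euclid cover [f [fP f_inj _]].
have pick (j : 'I_n) : {t : 'I_r | eqv (f j) (g t)}.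
  apply: constructive_indefinite_description.
  by have [t tr e] := cover _ (fP _ (ltn_ord j)); exists (Ordinal tr).
rewrite -[n]card_ord -[r]card_ord.
apply: (@leq_card _ _ (fun j => sval (pick j))) => j1 j2 /= e12.
apply: val_inj; apply: f_inj; rewrite ?ltn_ord //.
apply: (eqv_euclid _ _ _ _ (svalP (pick j2))).
by rewrite -e12; exact: (svalP (pick j1)).
Qed.

Section GroupLaws.

Variables d k : nat.
Implicit Types (v w x : seq letter) (g h : G d k).

Lemma push_cons i a x : sorted (fun x y : letter => x.1 != y.1) ((i, a) :: x) ->
  push k (i, a) x = (i, a) :: x.
Proof. by case: x => [|[j c] x] //= /andP[/negPf ->]. Qed.

Lemma push_push i a b x : reduced d k x -> 0 < a < k -> 0 < b < k ->
  push k (i, a) (push k (i, b) x) =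
  if (a + b) %% k == 0 then x else push k (i, (a + b) %% k) x.
Proof.
move=> rx /andP[a0 ak] /andP[b0 bk].
case: x rx => [|[j c] x] rx /=; first by rewrite eqxx; case: ifP.
case: (eqVneq i j) => [eij|nij] /=; last first.
  by rewrite eqxx; case: ifP => //= _; rewrite (negPf nij).
subst j; move: rx; rewrite /reduced /= => /andP[/andP[/andP[_ /andP[c0 ck]] _] sx].
have push_x e : push k (i, e) x = (i, e) :: x.
  by case: x sx => [|[j' c'] x] //= /andP[/negPf ->].
have assoc_mod : (a + (b + c) %% k) %% k = ((a + b) %% k + c) %% k.
  by rewrite modnDmr modnDml addnA.
have cm : c %% k = c by rewrite modn_small.
have am : a %% k = a by rewrite modn_small.
case: ifP => [bc0|bc0]; rewrite /= ?eqxx.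
  rewrite push_x; case: ifP => [ab0|ab0]; last first.
    have -> : ((a + b) %% k + c) %% k = a by rewrite -assoc_mod (eqP bc0) addn0 am.
    by rewrite (gtn_eqF a0).
  suff -> : a = c by [].
  by rewrite -[LHS]am -[RHS]cm -[in LHS](addn0 a) -(eqP bc0) assoc_mod (eqP ab0).
rewrite assoc_mod; have [ab0|//] := eqVneq ((a + b) %% k) 0.
by rewrite ab0 add0n cm (gtn_eqF c0).
Qed.

Lemma push_act l v w : valid d k l -> reduced d k v -> reduced d k w ->
  foldr (push k) w (push k l v) = push k l (foldr (push k) w v).
Proof.
case: l => i a; rewrite /valid /= => /andP[_ ha] rv rw.
case: v rv => [|[j b] v] //= rv.
case: (eqVneq i j) => [<-|//] /=.
move: rv; rewrite /reduced /= => /andP[/andP[/andP[_ hb] av] sv].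
by rewrite (push_push _ (foldr_push_red av rw) ha hb); case: ifP.
Qed.

Lemma GmulA g1 g2 g3 : Gmul g1 (Gmul g2 g3) = Gmul (Gmul g1 g2) g3.
Proof.
apply: val_inj; case: g1 g2 g3 => u /= /andP[au _] [v rv] [w rw] /=.
elim: u au => //= l u IH /andP[vl au].
by rewrite IH // push_act // foldr_push_red // (andP rv).1.
Qed.

Lemma Gmul1g g : Gmul (Gone d k) g = g.
Proof. exact: val_inj. Qed.

Lemma Gmulg1 g : Gmul g (Gone d k) = g.
Proof.
apply: val_inj; case: g => u /= /andP[_]; elim: u => //= [[i a]] u IH su.
by rewrite IH ?(path_sorted su) // push_cons.
Qed.

Lemma GmulVg g : Gmul (Ginv g) g = Gone d k.
Proof.
apply: val_inj; case: g => u /=; elim: u => //= [[i a]] u IH.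
rewrite /reduced /= => /andP[/andP[/andP[_ /andP[_ ak]] au] su].
rewrite rev_cons -cats1 foldr_cat /= eqxx subnK ?modnn ?(ltnW ak) //= IH //.
by rewrite /reduced au (path_sorted su).
Qed.

Lemma GmulKg g h : Gmul (Ginv g) (Gmul g h) = h.
Proof. by rewrite GmulA GmulVg Gmul1g. Qed.

Lemma GmulgV g : Gmul g (Ginv g) = Gone d k.
Proof. by rewrite -{1}(GmulKg (Ginv g) g) GmulVg Gmulg1 GmulVg. Qed.

Lemma GmulKVg g h : Gmul g (Gmul (Ginv g) h) = h.
Proof. by rewrite GmulA GmulgV Gmul1g. Qed.

Lemma GmulgK g h : Gmul (Gmul h g) (Ginv g) = h.
Proof. by rewrite -GmulA GmulgV Gmulg1. Qed.

Lemma GmulgKV g h : Gmul (Gmul h (Ginv g)) g = h.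
Proof. by rewrite -GmulA GmulVg Gmulg1. Qed.

Lemma Ginv_uniq g h : Gmul g h = Gone d k -> g = Ginv h.
Proof. by move=> e; rewrite -(GmulgK h g) e Gmul1g. Qed.

Lemma Ginv1 : Ginv (Gone d k) = Gone d k.
Proof. by symmetry; apply: Ginv_uniq; rewrite Gmul1g. Qed.

Lemma GpowD g m n : Gpow g (m + n) = Gmul (Gpow g m) (Gpow g n).
Proof.
elim: m => [|m IH]; first by rewrite Gmul1g.
by rewrite addSn /= IH GmulA.
Qed.

Lemma GpowM g m n : Gpow g (m * n) = Gpow (Gpow g m) n.
Proof. by elim: n => [|n IH]; rewrite ?muln0 // mulnS GpowD IH. Qed.

Lemma Gpow_conj g h n :
  Gpow (Gmul (Gmul g h) (Ginv g)) n = Gmul (Gmul g (Gpow h n)) (Ginv g).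
Proof.
elim: n => [|n IH] /=; first by rewrite Gmulg1 GmulgV.
by rewrite IH !GmulA GmulgKV.
Qed.

Lemma subgroup_pow (H : G d k -> Prop) h n : subgroup H -> H h -> H (Gpow h n).
Proof. by case=> H1 HM _ Hh; elim: n => //= n; apply: HM. Qed.

End GroupLaws.

Section GeneratorPowers.

Variables d k i : nat.
Hypotheses (le_id : i <= d) (k_gt0 : 0 < k).
Local Notation a := (Galpha d k i).

(* For k = 1 the letter (i, 1) is not valid and [Galpha] defaults to e. *)
Lemma Galpha_pow_val m :
  val (Gpow a m) = if m %% k == 0 then [::] else [:: (i, m %% k)].
Proof.
have [k_le1|k_gt1] := leqP k 1.
  have -> : k = 1 by apply/eqP; rewrite eqn_leq k_le1.
  have -> : Galpha d 1 i = Gone d 1.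
    by rewrite /Galpha /insubd insubF // /reduced /= /valid /= !andbF.
  by rewrite modn1; elim: m => //= m IH; rewrite Gmul1g.
have aE : val a = [:: (i, 1)].
  by rewrite /Galpha /insubd insubT //= /reduced /= /valid /= le_id k_gt1.
elim: m => [|m IH] /=; first by rewrite mod0n.
rewrite aE IH; case: eqP => [e|ne] /=.
  by rewrite -[m.+1]addn1 -modnDml e add0n (modn_small k_gt1).
by rewrite eqxx -[m.+1]add1n modnDmr.
Qed.

Lemma Galpha_pow_mod m : Gpow a m = Gpow a (m %% k).
Proof. by apply: val_inj; rewrite !Galpha_pow_val modn_mod. Qed.

Lemma Galpha_pow_eq1 m : Gpow a m = Gone d k <-> m %% k = 0.
Proof.
split=> [/(congr1 val)|e]; last by apply: val_inj; rewrite Galpha_pow_val e.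
by rewrite Galpha_pow_val; case: eqP.
Qed.

Lemma Galpha_powK n m : Gmul (Gpow a (n + (k - 1) * m)) (Gpow a m) = Gpow a n.
Proof.
rewrite -GpowD -addnA -{2}(mul1n m) -mulnDl subnK // GpowD.
by rewrite (Galpha_pow_eq1 (k * m)).2 ?Gmulg1 // modnMr.
Qed.

Lemma Galpha_pow_inv m : Ginv (Gpow a m) = Gpow a ((k - 1) * m).
Proof. by symmetry; apply: Ginv_uniq; rewrite -[X in Gpow _ X]add0n Galpha_powK. Qed.

End GeneratorPowers.

Section Multicells.

Variables d k : nat.
Variable H : G d k -> Prop.
Hypothesis sH : subgroup H.
Implicit Types (g h : G d k) (S T : G d k -> Prop).

Lemma mclass_setR S T h0 : H h0 -> seteq T (setR S h0) ->
  mceq (mclass H S) (mclass H T).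
Proof.
case: sH => _ HM HV Hh0 eT C; split.
  case=> h [Hh eC]; exists (Gmul (Ginv h0) h).
  split; first by apply: HM => //; apply: HV.
  move=> x; apply: (iff_trans (eC x)); split.
    case=> s [Ss ->]; exists (Gmul s h0); split; last by rewrite -GmulA GmulKVg.
    by apply/eT; exists s.
  by case=> t [/eT [s [Ss ->]] ->]; exists s; rewrite -GmulA GmulKVg.
case=> h [Hh eC]; exists (Gmul h0 h); split; first exact: HM.
move=> x; apply: (iff_trans (eC x)); split.
  by case=> t [/eT [s [Ss ->]] ->]; exists s; rewrite GmulA.
case=> s [Ss ->]; exists (Gmul s h0); split; last by rewrite GmulA.
by apply/eT; exists s.
Qed.

Lemma mceq_mclass S T : mceq (mclass H S) (mclass H T) ->
  exists2 h, H h & seteq T (setR S h).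
Proof.
move=> eST; have [|h [Hh eT]] := (eST T).2; last by exists h.
case: sH => H1 _ _; exists (Gone d k); split=> // x.
by split=> [Tx|[s [Ts ->]]]; [exists x|]; rewrite Gmulg1.
Qed.

Lemma dcell_eq g1 g2 :
  mceq (dcell H g1) (dcell H g2) <-> exists2 h, H h & g2 = Gmul g1 h.
Proof.
split=> [/mceq_mclass [h Hh eT]|[h Hh ->]].
  by exists h => //; have [s [-> ->]] := (eT g2).1 erefl.
by apply: mclass_setR Hh _ => x; split=> [->|[s [-> ->]]] //; exists g1.
Qed.

Lemma dcell_in_ridgeP g' i g : i <= d -> 0 < k ->
  dcell_in_ridge H g' i g <->
  exists m, exists2 h, H h & g' = Gmul (Gmul (Gpow (Galpha d k i) m) g) h.
Proof.
move=> le_id k_gt0; case: (sH) => _ HM HV; split.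
  case/mceq_mclass => h Hh eT.
  have [s [[m ->] eg]] : setR (Kcoset i g') h g.
    by apply/eT; exists 0; rewrite Gmul1g.
  exists ((k - 1) * m); exists (Ginv h); first exact: HV.
  by rewrite -Galpha_pow_inv // eg -!GmulA GmulKg GmulgV Gmulg1.
case=> m [h Hh ->] C; apply: iff_sym; apply: (mclass_setR Hh) => x; split.
  by case=> n ->; exists (Gmul (Gpow (Galpha d k i) (n + m)) g); split;
    [exists (n + m) | rewrite GpowD !GmulA].
by case=> s [[n ->] ->]; exists (n + (k - 1) * m); rewrite !GmulA Galpha_powK.
Qed.

Section Ridge.

Variables (i : nat) (g : G d k).
Hypotheses (le_id : i <= d) (k_gt0 : 0 < k).
Local Notation a := (Galpha d k i).

Lemma dcell_in_ridge_alpha_pow m : dcell_in_ridge H (Gmul (Gpow a m) g) i g.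
Proof.
case: (sH) => H1 _ _; apply/dcell_in_ridgeP => //.
by exists m; exists (Gone d k); rewrite ?Gmulg1.
Qed.

Lemma dcell_in_ridge_eq g' : dcell_in_ridge H g' i g ->
  exists m, mceq (dcell H g') (dcell H (Gmul (Gpow a m) g)).
Proof.
case: (sH) => _ _ HV /dcell_in_ridgeP [//|//|m [h Hh ->]].
by exists m; apply/dcell_eq; exists (Ginv h); rewrite ?GmulgK //; apply: HV.
Qed.

(* alpha_i^r g = g h with h in H, so alpha_i^r can be absorbed into H. *)
Lemma dcell_alpha_pow_mod r h n : H h -> Gmul (Gmul g h) (Ginv g) = Gpow a r ->
  mceq (dcell H (Gmul (Gpow a n) g)) (dcell H (Gmul (Gpow a (n %% r)) g)).
Proof.
case: (sH) => _ HM HV Hh ghg; apply/dcell_eq.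
exists (Ginv (Gpow h (n %/ r))); first by apply: HV; apply: subgroup_pow.
have -> : Gpow a n =
    Gmul (Gpow a (n %% r)) (Gmul (Gmul g (Gpow h (n %/ r))) (Ginv g)).
  by rewrite -Gpow_conj ghg -GpowM mulnC -GpowD addnC -divn_eq.
by rewrite !GmulA GmulgKV GmulgK.
Qed.

Lemma ridge_degree_of_trivial_meet : trivial_meet H i g -> ridge_degree H i g k.
Proof.
move=> tm; exists (fun j => Gmul (Gpow a j) g); split.
- by move=> j _; apply: dcell_in_ridge_alpha_pow.
- move=> j1 j2 j1k j2k /dcell_eq [h Hh e].
  have ghg : Gpow a ((k - 1) * j1 + j2) = Gmul (Gmul g h) (Ginv g).
    rewrite GpowD -Galpha_pow_inv // -[Gmul g h](GmulKg (Gpow a j1)).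
    by rewrite [Gmul (Gpow a j1) _]GmulA -e -!GmulA GmulgV Gmulg1.
  have /(Galpha_pow_eq1 le_id k_gt0) e0 :=
    tm _ (ex_intro _ _ erefl) (ex_intro2 _ _ h Hh ghg).
  have : (k * j1 + j2) %% k = j2 by rewrite mulnC modnMDl modn_small.
  rewrite -{1}(subnK k_gt0) mulnDl mul1n addnAC -modnDml e0 add0n.
  by rewrite modn_small.
- move=> x /dcell_in_ridge_eq [m ex]; exists (m %% k); first by rewrite ltn_pmod.
  by rewrite -Galpha_pow_mod.
Qed.

Lemma trivial_meet_of_ridge_degree : ridge_degree H i g k -> trivial_meet H i g.
Proof.
move=> deg _ [m ->] [h Hh ghg].
have [r0|r_neq0] := eqVneq (m %% k) 0; first exact/Galpha_pow_eq1.
suff : k <= m %% k by rewrite leqNgt ltn_pmod.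
apply: (count_classes_leq (g := fun t => Gmul (Gpow a t) g) _ _ deg).
  by move=> A B C eAC eBC X; apply: iff_trans (eAC X) (iff_sym (eBC X)).
have ghg_mod : Gmul (Gmul g h) (Ginv g) = Gpow a (m %% k).
  by rewrite -ghg -Galpha_pow_mod.
move=> x /dcell_in_ridge_eq [n ex].
exists (n %% (m %% k)); first by rewrite ltn_pmod // lt0n.
by move=> C; apply: iff_trans (ex C) (dcell_alpha_pow_mod n Hh ghg_mod C).
Qed.

End Ridge.

Lemma trivial_meet_quot_order i : normal H -> i <= d -> 0 < k ->
  (forall g, trivial_meet H i g) <-> quot_order H (Galpha d k i) k.
Proof.
case=> _ nH le_id k_gt0; have alpha_eq1 := Galpha_pow_eq1 le_id k_gt0.
case: (sH) => H1 _ _; split=> [tm|[_ _ nq] g _ [m ->] [h Hh ghg]].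
  split=> //; first by rewrite (alpha_eq1 k).2 ?modnn.
  move=> m /andP[m_gt0 mk] Hm; move: m_gt0; rewrite lt0n -[m](modn_small mk).
  apply/negP/negPn/eqP/alpha_eq1/(tm (Gone d k)); first by exists m.
  by exists (Gpow (Galpha d k i) m); rewrite ?Ginv1 ?Gmul1g ?Gmulg1.
apply/alpha_eq1/eqP/negPn/negP => r_neq0; apply: (nq (m %% k)).
  by rewrite lt0n r_neq0 ltn_pmod.
by rewrite -Galpha_pow_mod // ghg; apply: nH.
Qed.

End Multicells.

Unset Implicit Arguments.

Theorem lemma9 (d k : nat) (hd : 1 <= d) (hk : 1 <= k)
  (H : G d k -> Prop) (hH : subgroup H) :
  ((forall i g, i <= d -> ridge_degree H i g k) <->
   (forall i g, i <= d -> trivial_meet H i g)) /\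
  (normal H ->
   ((forall i g, i <= d -> ridge_degree H i g k) <->
    (forall i, i <= d -> quot_order H (Galpha d k i) k))).
Proof.
have degree_meet : (forall i g, i <= d -> ridge_degree H i g k) <->
    (forall i g, i <= d -> trivial_meet H i g).
  split=> A i g le_id.
    exact: trivial_meet_of_ridge_degree (A i g le_id).
  exact: ridge_degree_of_trivial_meet (A i g le_id).
split=> // nH; apply: (iff_trans degree_meet).
split=> [A i le_id | A i g le_id].
  by apply/(trivial_meet_quot_order hH nH le_id hk) => g; apply: A.
exact: (trivial_meet_quot_order hH nH le_id hk).2 (A i le_id) g.
Qed.
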